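(* Let $\lambda,\mu\in\mathbb{C}$ be nonzero. For each integer $L\geq 2$ with $N=L^2$ and each $J\in\mathbb{C}$, let $$V_{N,J}(q)=\sum_{i\in\Lambda_L}\Biggl[\frac{\lambda}{4!}q_i^4-\frac{\mu^2}{2}q_i^2+\frac{J}{4}\sum_{j\in\mathcal{N}(i)}(q_i-q_j)^2\Biggr],\qquad q\in\mathbb{C}^N,$$ and let $\mathcal{S}(N,\lambda,\mu^2)$ be the set of $J\in\mathbb{C}$ for which there exists $q\in\mathbb{C}^N$ with $\frac{\partial V_{N,J}}{\partial q_i}(q)=0$ for all $i$ and $\det\bigl(\frac{\partial^2 V_{N,J}(q)}{\partial q_i\partial q_j}\bigr)_{i,j}=0$. Then the set $$\mathcal{T}(\lambda,\mu^2)=\bigcup_{N\geq 2}\mathcal{S}(N,\lambda,\mu^2),$$ the union over all such lattice sizes $N=L^2\geq 2$, is a countable subset of $\mathbb{C}$.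
   Context: $\Lambda_L$ is the square lattice $(\mathbb{Z}/L\mathbb{Z})^2$ with periodic boundary conditions, whose $N=L^2$ sites are labelled $1,\dots,N$; $q_i$ is the variable at site $i$, and $\mathcal{N}(i)$ denotes the four nearest-neighbouring sites of $i$ (counted with multiplicity if they coincide). $V_{N,J}$ is the potential energy of the two-dimensional nearest-neighbour $\phi^4$ model with coupling $J$, extended to complex $q$ and $J$. *)

From HB Require Import structures.
From mathcomp Require Import all_boot all_order all_algebra.
From mathcomp Require Import reals.
From mathcomp Require Import complex.
From mathcomp Require Import mpoly.
Set Implicit Arguments. Unset Strict Implicit. Unset Printing Implicit Defensive.
Import Order.TTheory GRing.Theory Num.Theory.
Local Open Scope ring_scope.

Section Phi4.
Variable R : realType.
Local Notation C := (R[i]).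

(* The lattice Lambda_L = (Z/LZ)^2; site (x,y) is identified with the variable
   index mxvec_index x y : 'I_(L*L).  N = L*L. *)
Definition site (L : nat) (x y : 'I_L) : 'I_(L * L) := mxvec_index x y.

(* The four nearest neighbours of (x,y) on the periodic lattice, with
   multiplicity (ordS / ord_pred are cyclic successor / predecessor mod L). *)
Definition nbrs (L : nat) (x y : 'I_L) : seq 'I_(L * L) :=
  [:: site (ordS x) y; site (ord_pred x) y; site x (ordS y); site x (ord_pred y)].

Definition phi4_pot (L : nat) (lam mu J : C) : {mpoly C[L * L]} :=
  \sum_(x : 'I_L) \sum_(y : 'I_L)
    ( (lam / 4`!%:R) *: 'X_(site x y) ^+ 4
      - (mu ^+ 2 / 2%:R) *: 'X_(site x y) ^+ 2
      + (J / 4%:R) *: \sum_(j <- nbrs x y) ('X_(site x y) - 'X_j) ^+ 2 ).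

Definition S_set (L : nat) (lam mu : C) (J : C) : Prop :=
  exists q : 'I_(L * L) -> C,
    (forall i : 'I_(L * L), (mderiv i (phi4_pot L lam mu J)).@[q] = 0) /\
    \det (\matrix_(i, j) (mderiv j (mderiv i (phi4_pot L lam mu J))).@[q]) = 0.

(* T(lambda, mu^2) = union over lattice sizes N = L^2 >= 2, i.e. L >= 2. *)
Definition T_set (lam mu : C) (J : C) : Prop :=
  exists L : nat, (2 <= L)%N /\ S_set L lam mu J.

End Phi4.

Definition countable_set (T : Type) (A : T -> Prop) : Prop :=
  exists f : T -> nat, forall x y, A x -> A y -> f x = f y -> x = y.

From HB Require Import structures.
From mathcomp Require Import all_boot all_order all_algebra.
From mathcomp Require Import perm reals complex mpoly closed_field.
From mathcomp Require Import ring lra.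
From Stdlib Require Import Classical ClassicalEpsilon FunctionalExtensionality.
Import Order.TTheory GRing.Theory Num.Theory.
Local Open Scope ring_scope.
Set Implicit Arguments. Unset Strict Implicit. Unset Printing Implicit Defensive.

(* For fixed L the potential is a pencil V + J W of polynomials. Having a
   degenerate critical point is a first-order property of J over the
   algebraically closed field C, so by quantifier elimination the set S of
   such J is finite or cofinite. It is not cofinite: at J = 0 the sites
   decouple and, as lambda, mu <> 0, every critical point is nondegenerate;
   quantitatively, for |J| small the critical points stay bounded, each q_i
   stays close to a root of q (lambda/6 q^2 - mu^2), and the Hessian stays
   diagonally dominant. Hence every S is finite and T is a countable union
   of finite sets. *)

Section FiniteOrCofinite.
Variable F : closedFieldType.
Implicit Types (P Q : F -> Prop) (p : {poly F}).

Definition finite_or_cofinite P :=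
  exists s : seq F, (forall x, P x -> x \in s) \/ (forall x, ~ P x -> x \in s).

Lemma finite_or_cofinite_ext P Q :
  finite_or_cofinite P -> (forall x, P x <-> Q x) -> finite_or_cofinite Q.
Proof.
move=> [s [sP|sP]] PQ; exists s; [left|right] => x Qx; apply: sP; first exact/PQ.
by move/PQ.
Qed.

Lemma finite_or_cofiniteN P :
  finite_or_cofinite P -> finite_or_cofinite (fun x => ~ P x).
Proof.
move=> [s [sP|sP]]; exists s; [right|left] => x Px; apply: sP => //.
exact: NNPP.
Qed.

Lemma finite_or_cofiniteU P Q : finite_or_cofinite P -> finite_or_cofinite Q ->
  finite_or_cofinite (fun x => P x \/ Q x).
Proof.
move=> [s [sP|sP]] [t [tQ|tQ]].
- by exists (s ++ t); left => x [/sP|/tQ] xs; rewrite mem_cat xs ?orbT.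
- by exists t; right => x PQx; apply: tQ => Qx; apply: PQx; right.
- by exists s; right => x PQx; apply: sP => Px; apply: PQx; left.
- by exists s; right => x PQx; apply: sP => Px; apply: PQx; left.
Qed.

Lemma finite_or_cofiniteI P Q : finite_or_cofinite P -> finite_or_cofinite Q ->
  finite_or_cofinite (fun x => P x /\ Q x).
Proof.
move=> fP fQ; apply: (finite_or_cofinite_ext (finite_or_cofiniteN
  (finite_or_cofiniteU (finite_or_cofiniteN fP) (finite_or_cofiniteN fQ)))).
by move=> x; split=> [nPQ|[Px Qx] []//];
  split; apply: NNPP => nPx; apply: nPQ; [left|right].
Qed.

Lemma finite_or_cofinite_root p : finite_or_cofinite (root p).
Proof.
have [->|p0] := eqVneq p 0; first by exists [::]; right => x; rewrite root0.
have [r ->] := closed_field_poly_normal p; exists r; left => x.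
by rewrite rootZ ?lead_coef_eq0 // root_prod_XsubC.
Qed.

Lemma eval_rterm_poly (t : GRing.term F) : GRing.rterm t ->
  exists p : {poly F}, forall x, GRing.eval [:: x] t = p.[x].
Proof.
elim: t => //=.
- move=> [|k] _; first by exists 'X => x; rewrite hornerX.
  by exists 0 => x; rewrite horner0; case: k.
- by move=> c _; exists c%:P => x; rewrite hornerC.
- by move=> k _; exists k%:R%:P => x; rewrite hornerC.
- move=> t1 IH1 t2 IH2 /andP[/IH1[p1 E1] /IH2[p2 E2]].
  by exists (p1 + p2) => x; rewrite hornerD E1 E2.
- by move=> t1 IH /IH[p E]; exists (- p) => x; rewrite hornerN E.
- by move=> t1 IH k /IH[p E]; exists (p *+ k) => x; rewrite hornerMn E.
- move=> t1 IH1 t2 IH2 /andP[/IH1[p1 E1] /IH2[p2 E2]].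
  by exists (p1 * p2) => x; rewrite hornerM E1 E2.
- by move=> t1 IH k /IH[p E]; exists (p ^+ k) => x; rewrite horner_exp E.
Qed.

Lemma finite_or_cofinite_qf (f : GRing.formula F) :
  GRing.qf_form f && GRing.rformula f ->
  finite_or_cofinite (fun x => GRing.qf_eval [:: x] f).
Proof.
elim: f => //=.
- by move=> b _; exists [::]; case: b; [right|left].
- move=> t1 t2 /andP[/eval_rterm_poly[p1 E1] /eval_rterm_poly[p2 E2]].
  apply: (finite_or_cofinite_ext (finite_or_cofinite_root (p1 - p2))) => x.
  by rewrite E1 E2 rootE !hornerE subr_eq0.
- move=> f1 IH1 f2 IH2; rewrite andbACA => /andP[/IH1 fin1 /IH2 fin2].
  apply: (finite_or_cofinite_ext (finite_or_cofiniteI fin1 fin2)) => x.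
  by split=> [[-> ->]|/andP].
- move=> f1 IH1 f2 IH2; rewrite andbACA => /andP[/IH1 fin1 /IH2 fin2].
  apply: (finite_or_cofinite_ext (finite_or_cofiniteU fin1 fin2)) => x.
  by split=> [[]->|/orP]; rewrite ?orbT.
- move=> f1 IH1 f2 IH2; rewrite andbACA => /andP[/IH1 fin1 /IH2 fin2].
  apply: (finite_or_cofinite_ext
    (finite_or_cofiniteU (finite_or_cofiniteN fin1) fin2)) => x.
  rewrite implybE; split=> [[/negP/negbTE->|->]|/orP[/negP|]]; rewrite ?orbT; auto.
- move=> f IH /IH fin; apply: (finite_or_cofinite_ext (finite_or_cofiniteN fin)).
  by move=> x; split=> /negP.
Qed.

Lemma finite_or_cofinite_holds (f : GRing.formula F) : GRing.rformula f ->
  finite_or_cofinite (fun x => GRing.holds [:: x] f).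
Proof.
move=> rf; have wf := @ClosedFieldQE.wf_ex_elim F.
have ok := @ClosedFieldQE.holds_ex_elim F (fun n c h => @solve_monicpoly F n c h).
apply: (finite_or_cofinite_ext (finite_or_cofinite_qf (GRing.quantifier_elim_wf wf rf))).
by move=> x; split=> /(GRing.quantifier_elim_rformP wf ok _ rf).
Qed.

End FiniteOrCofinite.

Section PolynomialTerms.
Variables (R : comUnitRingType) (n : nat).

(* Term variable 0 is reserved for the parameter of a pencil, so the
   polynomial variable k is represented by the term variable k.+1. *)
Definition monomial_term (m : 'X_{1..n}) : GRing.term R :=
  \big[GRing.Mul/GRing.Const 1]_(k < n) GRing.Exp (GRing.Var _ k.+1) (m k).

Definition mpoly_term (p : {mpoly R[n]}) : GRing.term R :=
  \big[GRing.Add/GRing.Const 0]_(m <- msupp p)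
     GRing.Mul (GRing.Const p@_m) (monomial_term m).

Definition det_term (A : 'I_n -> 'I_n -> GRing.term R) : GRing.term R :=
  \big[GRing.Add/GRing.Const 0]_(s : 'S_n)
     GRing.Mul (GRing.Const ((-1) ^+ s)) (\big[GRing.Mul/GRing.Const 1]_i A i (s i)).

Lemma eval_mpoly_term e p : GRing.eval e (mpoly_term p) = p.@[fun k => e`_k.+1].
Proof.
rewrite mevalE (big_morph (GRing.eval e) (id1 := 0) (op1 := +%R)) //.
apply: eq_bigr => m _ /=; congr (_ * _).
by rewrite (big_morph (GRing.eval e) (id1 := 1) (op1 := *%R)) //.
Qed.

Lemma eval_det_term e A :
  GRing.eval e (det_term A) = \det (\matrix_(i, j) GRing.eval e (A i j)).
Proof.
rewrite (big_morph (GRing.eval e) (id1 := 0) (op1 := +%R)) //.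
apply: eq_bigr => s _ /=; congr (_ * _).
rewrite (big_morph (GRing.eval e) (id1 := 1) (op1 := *%R)) //.
by apply: eq_bigr => i _; rewrite mxE.
Qed.

Lemma rterm_mpoly_term p : GRing.rterm (mpoly_term p).
Proof.
apply: (big_ind (fun t => GRing.rterm t)) => //= [t u -> -> //|m _].
by apply: (big_ind (fun t => GRing.rterm t)) => //= t u -> ->.
Qed.

Lemma rterm_det_term A : (forall i j, GRing.rterm (A i j)) -> GRing.rterm (det_term A).
Proof.
move=> rA; apply: (big_ind (fun t => GRing.rterm t)) => //= [t u -> -> //|s _].
by apply: (big_ind (fun t => GRing.rterm t)) => //= t u -> ->.
Qed.

End PolynomialTerms.

Section FormulaConnectives.
Variable R : unitRingType.

Lemma holds_conj (I : eqType) (f : I -> GRing.formula R) (r : seq I) e :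
  GRing.holds e (foldr (fun i g => GRing.And (f i) g) (GRing.Bool true) r) <->
  (forall i, i \in r -> GRing.holds e (f i)).
Proof.
elim: r => [|i r IH] /=; first by split.
split=> [[fi /IH fr] j|fr]; first by rewrite inE => /predU1P[->|/fr].
by split; [apply: fr; rewrite mem_head | apply/IH => j rj; apply: fr; rewrite inE rj orbT].
Qed.

Lemma holds_Exists_iota k m e (f : GRing.formula R) : size e = k ->
  GRing.holds e (foldr GRing.Exists f (iota k m)) <->
  exists s, size s = m /\ GRing.holds (e ++ s) f.
Proof.
have set_nth_size (s : seq R) x : set_nth 0 s (size s) x = rcons s x.
  by elim: s => //= y s ->.
elim: m k e => [|m IH] k e <- /=.
  by split=> [fe|[s [/size0nil-> ]]]; [exists [::]|]; rewrite cats0.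
split=> [[x]|[[|x s] [//= [sm] fs]]].
  rewrite set_nth_size => /(IH _ _ (size_rcons e x))[s [sm fs]].
  by exists (x :: s); rewrite /= sm -cat_rcons.
exists x; rewrite set_nth_size; apply/(IH _ _ (size_rcons e x)).
by exists s; rewrite cat_rcons.
Qed.
End FormulaConnectives.

Section DegenerateCriticalPencil.
Variables (F : closedFieldType) (n : nat) (P Q : {mpoly F[n]}).

Definition degenerate_critical (V : {mpoly F[n]}) : Prop :=
  exists q : 'I_n -> F, (forall i, (mderiv i V).@[q] = 0) /\
    \det (\matrix_(i, j) (mderiv j (mderiv i V)).@[q]) = 0.

Definition pencil_term (p r : {mpoly F[n]}) : GRing.term F :=
  GRing.Add (mpoly_term p) (GRing.Mul (GRing.Var _ 0) (mpoly_term r)).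

Lemma eval_pencil_term J s p r :
  GRing.eval (J :: s) (pencil_term p r) = (p + J *: r).@[fun k => s`_k].
Proof. by rewrite /= !eval_mpoly_term mevalD mevalZ. Qed.

Definition degenerate_critical_formula : GRing.formula F :=
  foldr GRing.Exists
    (GRing.And
      (foldr (fun i g => GRing.And
          (GRing.Equal (pencil_term (mderiv i P) (mderiv i Q)) (GRing.Const 0)) g)
        (GRing.Bool true) (enum 'I_n))
      (GRing.Equal (det_term (fun i j =>
          pencil_term (mderiv j (mderiv i P)) (mderiv j (mderiv i Q)))) (GRing.Const 0)))
    (iota 1 n).

Lemma rformula_degenerate_critical_formula : GRing.rformula degenerate_critical_formula.
Proof.
rewrite /degenerate_critical_formula; elim: (iota 1 n) => //=.
rewrite rterm_det_term => [|i j]; last by rewrite /= !rterm_mpoly_term.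
by elim: (enum 'I_n) => //= i r; rewrite !rterm_mpoly_term !andbT.
Qed.

Lemma holds_degenerate_critical_formula J :
  GRing.holds [:: J] degenerate_critical_formula <-> degenerate_critical (P + J *: Q).
Proof.
have derivE i : mderiv i (P + J *: Q) = mderiv i P + J *: mderiv i Q.
  by rewrite mderivD mderivZ.
have hessE i j : mderiv j (mderiv i (P + J *: Q)) =
    mderiv j (mderiv i P) + J *: mderiv j (mderiv i Q).
  by rewrite derivE mderivD mderivZ.
rewrite (holds_Exists_iota _ _ (k := 1)) //; split.
  case=> s [_ [/holds_conj grad0 /= det0]]; exists (fun k => s`_k); split.
    move=> i; have /= := grad0 i (mem_enum _ i).
    by rewrite !eval_mpoly_term derivE mevalD mevalZ.
  move: det0; rewrite eval_det_term => det0; rewrite -[RHS]det0; congr (\det _).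
  by apply/matrixP => i j; rewrite !mxE eval_pencil_term hessE.
case=> q [grad0 det0]; exists [seq q k | k <- enum 'I_n].
have nthE : (fun k : 'I_n => [seq q k | k <- enum 'I_n]`_k) = q.
  apply: functional_extensionality => k.
  by rewrite (nth_map k) ?size_enum_ord // nth_ord_enum.
split; first by rewrite size_map size_enum_ord.
split.
  apply/holds_conj => i _ /=.
  by rewrite !eval_mpoly_term nthE -mevalZ -mevalD -derivE.
rewrite /= eval_det_term -[RHS]det0; congr (\det _).
by apply/matrixP => i j; rewrite !mxE eval_pencil_term nthE hessE.
Qed.

Lemma finite_or_cofinite_degenerate_critical :
  finite_or_cofinite (fun J => degenerate_critical (P + J *: Q)).
Proof.
apply: (finite_or_cofinite_ext
  (finite_or_cofinite_holds rformula_degenerate_critical_formula)).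
exact: holds_degenerate_critical_formula.
Qed.

End DegenerateCriticalPencil.

Section ComplexNorm.
Variable R : rcfType.
Local Notation normc := (@Normc.normc R).
Implicit Types x y : R[i].

(* [Rcomplex R] is [R[i]] seen as a normed module over [R], with norm [normc]. *)
Lemma normc_ge0 x : 0 <= normc x.
Proof. exact: (@normr_ge0 R (Rcomplex R)). Qed.

Lemma normc_gt0 x : (0 < normc x) = (x != 0).
Proof. exact: (@normr_gt0 R (Rcomplex R)). Qed.

Lemma ler_normcB x y : normc (x - y) <= normc x + normc y.
Proof. exact: (@ler_normB R (Rcomplex R)). Qed.

Lemma lerB_normc x y : normc x - normc y <= normc (x - y).
Proof. exact: (@lerB_dist R (Rcomplex R)). Qed.

Lemma ler_normc_sum (I : Type) (r : seq I) (P : pred I) (F : I -> R[i]) :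
  normc (\sum_(i <- r | P i) F i) <= \sum_(i <- r | P i) normc (F i).
Proof. exact: (@ler_norm_sum R (Rcomplex R)). Qed.

Lemma normc_natr k : normc k%:R = k%:R.
Proof. by rewrite -[k%:R]/(1 *+ k) normcMn Normc.normc1. Qed.

Lemma normc_sqr x : normc (x ^+ 2) = normc x ^+ 2.
Proof. by rewrite !expr2 Normc.normcM. Qed.

Lemma normc_divn x k : normc (x / k%:R) = normc x / k%:R.
Proof. by rewrite Normc.normcM Normc.normcV normc_natr. Qed.

(* Levy-Desplanques: compare the entries of the column where a kernel vector
   attains its largest modulus. *)
Lemma diag_dominant_det_neq0 n (d : 'rV[R[i]]_n) (E : 'M[R[i]]_n) :
  (forall j, \sum_i normc (E i j) < normc (d 0 j)) -> \det (diag_mx d + E) != 0.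
Proof.
move=> dominant; apply/negP => /det0P[v v0 vA].
have [j vj0] : exists j, v 0 j != 0.
  apply/existsP; apply: contraR v0 => /existsPn v0.
  by apply/eqP/rowP => j; rewrite mxE; apply/eqP/negPn.
pose j0 := [arg max_(k > j) normc (v 0 k)]%O.
have vmax k : normc (v 0 k) <= normc (v 0 j0).
  by rewrite /j0; case: arg_maxP => //= i _; apply.
have vj0_gt0 : 0 < normc (v 0 j0) by apply: lt_le_trans (vmax j); rewrite normc_gt0.
have col : v 0 j0 * d 0 j0 = - \sum_i v 0 i * E i j0.
  apply/eqP; rewrite -addr_eq0; apply/eqP.
  by have := congr1 (fun w : 'rV_n => w 0 j0) vA; rewrite mulmxDr mul_mx_diag !mxE.
have := dominant j0; rewrite -(ltr_pM2l vj0_gt0) -Normc.normcM col normcN.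
apply/negP; rewrite -leNgt big_distrr /=.
apply: le_trans (ler_normc_sum _ _ _) (ler_sum _ _) => i _.
by rewrite Normc.normcM ler_wpM2r ?normc_ge0.
Qed.

End ComplexNorm.

Section OnsiteEstimates.
Variables (R : rcfType) (lam mu : R[i]).
Hypotheses (lam0 : lam != 0) (mu0 : mu != 0).
Local Notation normc := (@Normc.normc R).
Local Notation a := (normc lam).
Local Notation m := (normc (mu ^+ 2)).

Lemma onsite_root_bound (z : R[i]) e : 0 <= e ->
  normc (z * (lam / 6%:R * z ^+ 2 - mu ^+ 2)) <= e * normc z ->
  normc z <= 1 + 6%:R * (m + e) / a.
Proof.
move=> e0; have a0 : 0 < a by rewrite normc_gt0.
have [->|z0] := eqVneq z 0.
  by rewrite Normc.normc0 addr_ge0 // divr_ge0 ?mulr_ge0 ?addr_ge0 ?normc_ge0 // ltW.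
have z_gt0 : 0 < normc z by rewrite normc_gt0.
rewrite Normc.normcM mulrC ler_pM2r // => ge.
have := lerB_normc (lam / 6%:R * z ^+ 2) (mu ^+ 2).
rewrite Normc.normcM normc_divn (normc_sqr z) => gm.
have : normc z ^+ 2 <= 6%:R * (m + e) / a.
  by rewrite ler_pdivlMr //; lra.
nra.
Qed.

(* Either [z] is small, and then [lam/2 z^2 - mu^2] is close to [- mu^2], or
   [g := lam/6 z^2 - mu^2] is small, and [lam/2 z^2 - mu^2 = 3 g + 2 mu^2]. *)
Lemma onsite_hessian_lower_bound (z : R[i]) :
  normc (z * (lam / 6%:R * z ^+ 2 - mu ^+ 2)) <= Order.min 1 (m / a) * m / 4%:R ->
  m / 2%:R <= normc (lam / 2%:R * z ^+ 2 - mu ^+ 2).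
Proof.
have a0 : 0 < a by rewrite normc_gt0.
have m0 : 0 < m by rewrite normc_gt0 expf_neq0.
set eta := Order.min 1 (m / a); set g := _ - _; set h := _ - _.
have eta0 : 0 < eta by rewrite lt_min ltr01 divr_gt0.
have eta1 : eta <= 1 by rewrite ge_min lexx.
have eta_m : a * eta <= m by rewrite mulrC -ler_pdivlMr // ge_min lexx orbT.
have [z_le|z_gt] := leP (normc z) eta => [_|].
  have := lerB_normc (mu ^+ 2) (lam / 2%:R * z ^+ 2).
  rewrite -[mu ^+ 2 - _]opprB normcN -/h Normc.normcM normc_divn (normc_sqr z).
  have z0 := normc_ge0 z.
  have : a * normc z ^+ 2 <= a * eta by apply: ler_wpM2l; [exact: ltW | nra].
  lra.
have hg : 2%:R * mu ^+ 2 = h - 3%:R * g.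
  by rewrite /h /g; field.
rewrite Normc.normcM => zg.
have g_le : normc g <= m / 4%:R by have := normc_ge0 g; nra.
have := ler_normcB h (3%:R * g).
rewrite -hg (Normc.normcM 2%:R) (Normc.normcM 3%:R) !normc_natr.
lra.
Qed.

End OnsiteEstimates.

Section MpolyDerivatives.
Variables (F : comNzRingType) (n : nat).
Implicit Types (s t i j : 'I_n) (q : 'I_n -> F).
Local Notation delta s i := ((s == i)%:R : F).

Lemma mderiv_sum (I : Type) (r : seq I) (P : pred I) (G : I -> {mpoly F[n]}) i :
  mderiv i (\sum_(k <- r | P k) G k) = \sum_(k <- r | P k) mderiv i (G k).
Proof. by apply: (big_morph (mderiv i)); [exact: mderivD | exact: mderiv0]. Qed.

Lemma meval_sum (I : Type) (r : seq I) (P : pred I) (G : I -> {mpoly F[n]}) q :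
  (\sum_(k <- r | P k) G k).@[q] = \sum_(k <- r | P k) (G k).@[q].
Proof. by apply: (big_morph (meval q)); [exact: mevalD | exact: meval0]. Qed.

Lemma mderivXU i s : mderiv i ('X_s : {mpoly F[n]}) = (delta s i)%:MP.
Proof.
rewrite mderivX mnm1E; have [->|ne] := eqVneq s i; last by rewrite scale0r mpolyC0.
have -> : (U_(i) - U_(i))%MM = 0%MM by apply/mnmP => k; rewrite mnmBE subnn mnm0E.
by rewrite mpolyX0 scale1r mpolyC1.
Qed.

Lemma eval_mderiv_quartic (c4 c2 : F) s i q :
  (mderiv i (c4 *: 'X_s ^+ 4 - c2 *: 'X_s ^+ 2)).@[q] =
  delta s i * (4%:R * c4 * q s ^+ 3 - 2%:R * c2 * q s).
Proof.
rewrite !exprS expr0 !mulr1.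
rewrite !(mderivB, mderivZ, mderivM, mderivXU).
by rewrite !(mevalB, mevalZ, mevalD, mevalM, mevalC, mevalXU); ring.
Qed.

Lemma eval_mderiv2_quartic (c4 c2 : F) s i j q :
  (mderiv j (mderiv i (c4 *: 'X_s ^+ 4 - c2 *: 'X_s ^+ 2))).@[q] =
  delta s i * delta s j * (12%:R * c4 * q s ^+ 2 - 2%:R * c2).
Proof.
rewrite !exprS expr0 !mulr1.
rewrite !(mderivB, mderivZ, mderivM, mderivD, mderivXU, mderivC).
by rewrite !(mevalB, mevalZ, mevalD, mevalM, mevalC, mevalXU, meval0); ring.
Qed.

Lemma eval_mderiv_bond s t i q :
  (mderiv i (('X_s - 'X_t) ^+ 2)).@[q] = 2%:R * (q s - q t) * (delta s i - delta t i).
Proof.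
rewrite expr2 !(mderivB, mderivM, mderivXU).
by rewrite !(mevalB, mevalD, mevalM, mevalC, mevalXU); ring.
Qed.

Lemma eval_mderiv2_bond s t i j q :
  (mderiv j (mderiv i (('X_s - 'X_t) ^+ 2))).@[q] =
  2%:R * (delta s j - delta t j) * (delta s i - delta t i).
Proof.
rewrite expr2 !(mderivB, mderivM, mderivD, mderivXU, mderivC).
by rewrite !(mevalB, mevalD, mevalM, mevalC, mevalXU, meval0); ring.
Qed.

End MpolyDerivatives.

Lemma sum_delta (I : finType) (V : pzRingType) (G : I -> V) i :
  \sum_k ((k == i)%:R * G k) = G i.
Proof.
rewrite (bigD1 i) //= eqxx mul1r big1 ?addr0 // => k /negPf->.
by rewrite mul0r.
Qed.

Section Phi4Potential.
Variables (R : realType) (L : nat) (lam mu : R[i]).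
Local Notation C := R[i].
Local Notation N := (L * L)%N.
Local Notation normc := (@Normc.normc R).

Definition onsite_pot : {mpoly C[N]} := \sum_(x : 'I_L) \sum_(y : 'I_L)
  ((lam / 4`!%:R) *: 'X_(site x y) ^+ 4 - (mu ^+ 2 / 2%:R) *: 'X_(site x y) ^+ 2).

Definition hopping_pot : {mpoly C[N]} := \sum_(x : 'I_L) \sum_(y : 'I_L)
  (1 / 4%:R) *: \sum_(j <- nbrs x y) ('X_(site x y) - 'X_j) ^+ 2.

Lemma S_setE J : S_set L lam mu J = degenerate_critical (onsite_pot + J *: hopping_pot).
Proof.
rewrite /S_set; suff -> : phi4_pot L lam mu J = onsite_pot + J *: hopping_pot by [].
rewrite /phi4_pot /onsite_pot /hopping_pot scaler_sumr -big_split.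
apply: eq_bigr => x _; rewrite scaler_sumr -big_split; apply: eq_bigr => y _.
by rewrite scalerA mul1r.
Qed.

Lemma sum_sites (V : nmodType) (G : 'I_N -> V) :
  \sum_(x : 'I_L) \sum_(y : 'I_L) G (site x y) = \sum_k G k.
Proof.
rewrite pair_big /= [RHS](reindex (uncurry (@mxvec_index L L))) /=; last first.
  by have [g g_can can_g] := curry_mxvec_bij L L; exists g => // k _; apply: can_g.
by apply: eq_bigr => -[x y] _.
Qed.

Lemma onsite_gradE i q :
  (mderiv i onsite_pot).@[q] = q i * (lam / 6%:R * q i ^+ 2 - mu ^+ 2).
Proof.
rewrite /onsite_pot mderiv_sum meval_sum.
under eq_bigr do rewrite mderiv_sum meval_sum.
under eq_bigr do under eq_bigr do rewrite eval_mderiv_quartic.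
rewrite (sum_sites (fun k => (k == i)%:R *
  (4%:R * (lam / (4`!)%:R) * q k ^+ 3 - 2%:R * (mu ^+ 2 / 2%:R) * q k))).
by rewrite sum_delta (_ : 4`! = 24)%N //; field.
Qed.

Lemma onsite_hessE i j q : (mderiv j (mderiv i onsite_pot)).@[q] =
  (i == j)%:R * (lam / 2%:R * q i ^+ 2 - mu ^+ 2).
Proof.
rewrite /onsite_pot (mderiv_sum _ _ _ i) (mderiv_sum _ _ _ j) meval_sum.
under eq_bigr do rewrite (mderiv_sum _ _ _ i) (mderiv_sum _ _ _ j) meval_sum.
under eq_bigr do under eq_bigr do rewrite eval_mderiv2_quartic -mulrA.
rewrite (sum_sites (fun k => (k == i)%:R * ((k == j)%:R *
  (12%:R * (lam / (4`!)%:R) * q k ^+ 2 - 2%:R * (mu ^+ 2 / 2%:R))))).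
by rewrite sum_delta (_ : 4`! = 24)%N //; field.
Qed.

Lemma hopping_bound (D : {mpoly C[N]} -> C) c :
  {morph D : p r / p + r} -> D 0 = 0 -> (forall a p, D (a *: p) = a * D p) ->
  (forall s t, normc (D (('X_s - 'X_t) ^+ 2)) <= c) ->
  normc (D hopping_pot) <= N%:R * c.
Proof.
move=> DD D0 DZ bond; rewrite /hopping_pot (big_morph D DD D0).
apply: le_trans (ler_normc_sum _ _ _) _.
have -> : N%:R * c = \sum_(x : 'I_L) \sum_(y : 'I_L) c.
  by rewrite !sumr_const !card_ord -mulrnA mulr_natl.
apply: ler_sum => x _; rewrite (big_morph D DD D0).
apply: le_trans (ler_normc_sum _ _ _) (ler_sum _ _) => y _.
rewrite DZ (big_morph D DD D0) Normc.normcM normc_divn Normc.normc1.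
rewrite mul1r ler_pdivrMl //.
apply: le_trans (ler_normc_sum _ _ _) _.
by rewrite /nbrs !big_cons big_nil addr0 mulr_natl !mulrS mulr0n addr0 !lerD.
Qed.

Lemma normc_delta_sub (s t i : 'I_N) : normc ((s == i)%:R - (t == i)%:R : C) <= 2%:R.
Proof.
apply: le_trans (ler_normcB _ _) _; rewrite !normc_natr.
by rewrite -natrD ler_nat (leq_add (leq_b1 _) (leq_b1 _)).
Qed.

Lemma hopping_grad_bound i q M : (forall k, normc (q k) <= M) ->
  normc ((mderiv i hopping_pot).@[q]) <= N%:R * (8%:R * M).
Proof.
move=> qM; apply: (hopping_bound (D := fun p => (mderiv i p).@[q])) => [p r|||s t] /=.
- by rewrite mderivD mevalD.
- by rewrite mderiv0 meval0.
- by move=> c p; rewrite mderivZ mevalZ.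
rewrite eval_mderiv_bond !Normc.normcM normc_natr.
have qst : normc (q s - q t) <= M + M by apply: le_trans (ler_normcB _ _) (lerD _ _).
have := normc_delta_sub s t i; have := normc_ge0 (q s - q t).
have := normc_ge0 ((s == i)%:R - (t == i)%:R : C); nra.
Qed.

Lemma hopping_hess_bound i j q :
  normc ((mderiv j (mderiv i hopping_pot)).@[q]) <= N%:R * 8%:R.
Proof.
apply: (hopping_bound (D := fun p => (mderiv j (mderiv i p)).@[q])) => [p r|||s t] /=.
- by rewrite !mderivD mevalD.
- by rewrite !mderiv0 meval0.
- by move=> c p; rewrite !mderivZ mevalZ.
rewrite eval_mderiv2_bond !Normc.normcM normc_natr.
have := normc_delta_sub s t i; have := normc_delta_sub s t j.
have := normc_ge0 ((s == i)%:R - (t == i)%:R : C).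
have := normc_ge0 ((s == j)%:R - (t == j)%:R : C); nra.
Qed.

Lemma onsite_force_bound J q M :
  (forall i, (mderiv i (onsite_pot + J *: hopping_pot)).@[q] = 0) ->
  (forall k, normc (q k) <= M) ->
  forall i, normc (q i * (lam / 6%:R * q i ^+ 2 - mu ^+ 2)) <= normc J * (N%:R * 8%:R) * M.
Proof.
move=> grad0 qM i; have := grad0 i.
rewrite mderivD mderivZ mevalD mevalZ onsite_gradE => /eqP; rewrite addr_eq0 => /eqP->.
rewrite normcN Normc.normcM -!mulrA ler_wpM2l ?normc_ge0 //.
exact: hopping_grad_bound.
Qed.

Lemma hessianE J q :
  \matrix_(i, j) (mderiv j (mderiv i (onsite_pot + J *: hopping_pot))).@[q] =
  diag_mx (\row_i (lam / 2%:R * q i ^+ 2 - mu ^+ 2)) +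
  J *: \matrix_(i, j) (mderiv j (mderiv i hopping_pot)).@[q].
Proof.
apply/matrixP => i j.
by rewrite !mxE !mderivD !mderivZ mevalD mevalZ onsite_hessE mulr_natl.
Qed.

Lemma hessian_det_neq0 J q :
  (forall i, N%:R * (normc J * (N%:R * 8%:R)) < normc (lam / 2%:R * q i ^+ 2 - mu ^+ 2)) ->
  \det (\matrix_(i, j) (mderiv j (mderiv i (onsite_pot + J *: hopping_pot))).@[q]) != 0.
Proof.
move=> diag_large; rewrite hessianE; apply: diag_dominant_det_neq0 => j.
rewrite mxE; apply: le_lt_trans (diag_large j).
rewrite -[X in X%:R * _](card_ord N) mulr_natl -sumr_const.
apply: ler_sum => i _; rewrite !mxE Normc.normcM ler_wpM2l ?normc_ge0 //.
exact: hopping_hess_bound.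
Qed.

End Phi4Potential.

Section SmallCoupling.
Variables (R : realType) (L : nat) (lam mu : R[i]).
Hypotheses (L0 : (0 < L)%N) (lam0 : lam != 0) (mu0 : mu != 0).
Local Notation N := (L * L)%N.
Local Notation normc := (@Normc.normc R).

(* Critical points are bounded by [B]; for [|J| <= d] each [q i] then nearly
   solves [q (lam/6 q^2 - mu^2) = 0], which keeps the Hessian diagonal above
   [m/2] and makes it dominate the off-diagonal part. *)
Lemma S_set_small_coupling :
  exists2 d : R, 0 < d & forall J, normc J <= d -> ~ S_set L lam mu J.
Proof.
have N0 : (0 < N)%N by rewrite muln_gt0 L0.
set a := normc lam; set m := normc (mu ^+ 2); set K : R := N%:R * 8%:R.
have a0 : 0 < a by rewrite normc_gt0.
have m0 : 0 < m by rewrite normc_gt0 expf_neq0.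
have K0 : 0 < K by rewrite mulr_gt0 ?ltr0n.
set B : R := 1 + 6%:R * (m + K) / a.
have B0 : 0 <= B by rewrite addr_ge0 // divr_ge0 ?mulr_ge0 ?addr_ge0 ?ltW.
set eta : R := Order.min 1 (m / a).
have eta0 : 0 < eta by rewrite lt_min ltr01 divr_gt0.
have eta_m : eta * m <= m by rewrite ler_piMl ?(ltW m0) // ge_min lexx.
have KBN0 : 0 < 4%:R * (K * (B + N%:R)).
  by rewrite !mulr_gt0 ?ltr0n // ltr_wpDl ?ltr0n.
set d : R := Order.min 1 (eta * m / (4%:R * (K * (B + N%:R)))).
have d0 : 0 < d by rewrite lt_min ltr01 divr_gt0 // mulr_gt0.
have d1 : d <= 1 by rewrite ge_min lexx.
have dKBN : d * (K * (B + N%:R)) <= eta * m / 4%:R.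
  have : d <= eta * m / (4%:R * (K * (B + N%:R))) by rewrite ge_min lexx orbT.
  by rewrite !ler_pdivlMr ?ltr0n // => ?; lra.
exists d => // J J_le; rewrite S_setE => -[q [grad0 /eqP]]; apply/negP.
have J0 := normc_ge0 J.
pose k0 := [arg max_(k > Ordinal N0) normc (q k)]%O.
have qM k : normc (q k) <= normc (q k0).
  by rewrite /k0; case: arg_maxP => //= i _; apply.
set M := normc (q k0) in qM; have M0 : 0 <= M := normc_ge0 _.
have force := onsite_force_bound grad0 qM.
have M_le : M <= B.
  have JK0 : 0 <= normc J * K by rewrite mulr_ge0 // ltW.
  have := onsite_root_bound lam0 JK0 (force k0); rewrite -/M -/m -/a => /le_trans; apply.
  rewrite lerD2l ler_pM2r ?invr_gt0 // ler_pM2l ?ltr0n // lerD2l.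
  by rewrite ler_piMl ?(ltW K0) // (le_trans J_le d1).
have JKM : normc J * K * M <= d * (K * (B + N%:R)).
  rewrite -mulrA; apply: ler_pM => //; first exact: mulr_ge0 (ltW K0) M0.
  by apply: ler_wpM2l; [exact: ltW | have := ler0n R N; lra].
apply: hessian_det_neq0 => i.
apply: lt_le_trans (onsite_hessian_lower_bound lam0 mu0 _); last first.
  by apply: le_trans (force i) (le_trans JKM dKBN).
rewrite -/K -/m; have : N%:R * (normc J * K) <= N%:R * (d * K).
  by rewrite ler_pM2l ?ltr0n // ler_pM2r.
have := mulr_ge0 (mulr_ge0 (ltW d0) (ltW K0)) B0; lra.
Qed.

End SmallCoupling.

Lemma finite_or_cofinite_avoid_ball (R : rcfType) (P : R[i] -> Prop) (d : R) :
  finite_or_cofinite P -> 0 < d -> (forall z, Normc.normc z <= d -> ~ P z) ->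
  exists s : seq R[i], forall z, P z -> z \in s.
Proof.
move=> [s [sP|sP]] d0 ball; first by exists s.
pose g k : R[i] := real_complex R (d / k.+1%:R).
have g_inj : injective g.
  move=> k l /complexI /(mulfI (lt0r_neq0 d0)) /invr_inj /eqP.
  by rewrite eqr_nat => /eqP[].
have g_s : {subset [seq g k | k <- iota 0 (size s).+1] <= s}.
  move=> _ /mapP[k _ ->]; apply/sP/ball.
  rewrite /Normc.normc /= expr0n addr0 sqrtr_sqr ger0_norm ?divr_ge0 ?(ltW d0) //.
  by rewrite ler_pdivrMr // ler_peMr ?ler1n // ltW.
have := uniq_leq_size _ g_s; rewrite map_inj_uniq // iota_uniq => /(_ isT).
by rewrite size_map size_iota ltnn.
Qed.

Lemma countable_set_bigcup (T : eqType) (A : nat -> T -> Prop) :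
  (forall n, exists s : seq T, forall x, A n x -> x \in s) ->
  countable_set (fun x => exists n, A n x).
Proof.
move=> finA; pose s n := proj1_sig (constructive_indefinite_description _ (finA n)).
have sA n x : A n x -> x \in s n.
  exact: (proj2_sig (constructive_indefinite_description _ (finA n))).
pose n_of x := epsilon (inhabits 0%N) (fun n => A n x).
have n_ofP x : (exists n, A n x) -> A (n_of x) x by apply: epsilon_spec.
exists (fun x => pickle (n_of x, index x (s (n_of x)))) => x y Ax Ay /(pcan_inj pickleK).
case=> nxy ixy; have /sA xs := n_ofP x Ax; have /sA ys := n_ofP y Ay.
by rewrite -(nth_index x xs) ixy nxy nth_index.
Qed.

Theorem corollary1 (R : realType) (lam mu : R[i]) :
  lam != 0 -> mu != 0 -> countable_set (T_set lam mu).
Proof.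
move=> lam0 mu0.
apply: (countable_set_bigcup (A := fun L J => (2 <= L)%N /\ S_set L lam mu J)) => L.
have [L2|_] := leqP 2 L; last by exists [::] => J [].
have [d d0 small] := S_set_small_coupling (ltnW L2) lam0 mu0.
have fin : finite_or_cofinite (S_set L lam mu).
  apply: (finite_or_cofinite_ext (finite_or_cofinite_degenerate_critical
    (onsite_pot L lam mu) (hopping_pot R L))) => J.
  by rewrite S_setE.
have [s sS] := finite_or_cofinite_avoid_ball fin d0 small.
by exists s => J [_ /sS].
Qed.
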